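(* Every chandelier is a restricted frame graph.
   Context: A chandelier is a graph obtained from a tree $T$ by adding a new vertex adjacent to every leaf of $T$. A frame is the boundary of an axis-parallel box $I\times J\subset\mathbb R^2$. A graph $G$ is a restricted frame graph if there is a family of frames $\{F_v : v\in V(G)\}$ with $uv\in E(G)$ iff $F_u\cap F_v\neq\emptyset$, satisfying: (1) corners of a frame do not coincide with any point of another frame; (2) the left side of any frame does not intersect any other frame; (3) if the right side of a frame intersects a second frame, this right side intersects both the top and the bottom side of the second frame; (4) if two frames have non-empty intersection, then no frame is entirely contained in the intersection of the two regions bounded by these two frames. *)

From HB Require Import structures.
From mathcomp Require Import all_boot all_order all_algebra.
From mathcomp Require Import reals.
Set Implicit Arguments. Unset Strict Implicit. Unset Printing Implicit Defensive.
Import Order.TTheory GRing.Theory Num.Theory.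
Local Open Scope ring_scope.

Section Graphs.
Variables (V : finType) (e : rel V).

Definition connected_on (S : {set V}) : Prop :=
  forall x y, x \in S -> y \in S ->
    exists p : seq V, [/\ path e x p, last x p = y & all (fun z => z \in S) p].

Definition acyclic_on (S : {set V}) : Prop :=
  forall c : seq V, all (fun z => z \in S) c -> uniq c -> (3 <= size c)%N -> ~~ cycle e c.

Definition is_tree_on (S : {set V}) : Prop :=
  S != set0 /\ connected_on S /\ acyclic_on S.

Definition leaf_on (S : {set V}) (x : V) : bool :=
  (x \in S) && (#|[set y in S | e x y]| == 1)%N.

Definition chandelier : Prop :=
  exists r : V, is_tree_on [set~ r] /\
    forall x, x != r -> (e r x <-> leaf_on [set~ r] x).
End Graphs.

Record frame (R : realType) := Frame { fl : R; fr : R; fb : R; ft : R }.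

Section Frames.
Variable R : realType.
Implicit Types (F : frame R) (p : R * R).

Definition on_left F p := p.1 = fl F /\ fb F <= p.2 <= ft F.
Definition on_right F p := p.1 = fr F /\ fb F <= p.2 <= ft F.
Definition on_bottom F p := p.2 = fb F /\ fl F <= p.1 <= fr F.
Definition on_top F p := p.2 = ft F /\ fl F <= p.1 <= fr F.
Definition on_frame F p := on_left F p \/ on_right F p \/ on_bottom F p \/ on_top F p.
Definition in_box F p := (fl F <= p.1 <= fr F) /\ (fb F <= p.2 <= ft F).
Definition corner F p := (p.1 = fl F \/ p.1 = fr F) /\ (p.2 = fb F \/ p.2 = ft F).

Definition meets (A B : R * R -> Prop) := exists p, A p /\ B p.

Definition restricted_frame_rep (V : finType) (e : rel V) (F : V -> frame R) : Prop :=
      (forall v, fl (F v) < fr (F v) /\ fb (F v) < ft (F v)) /\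
      (forall u v, u != v -> (e u v <-> meets (on_frame (F u)) (on_frame (F v)))) /\
      (forall u v, u != v -> forall p, corner (F u) p -> ~ on_frame (F v) p) /\
      (forall u v, u != v -> ~ meets (on_left (F u)) (on_frame (F v))) /\
      (forall u v, u != v -> meets (on_right (F u)) (on_frame (F v)) ->
        meets (on_right (F u)) (on_top (F v)) /\ meets (on_right (F u)) (on_bottom (F v))) /\
      (forall u v, u != v -> meets (on_frame (F u)) (on_frame (F v)) ->
        forall w, ~ (forall p, on_frame (F w) p -> in_box (F u) p /\ in_box (F v) p)).

Definition restricted_frame_graph (V : finType) (e : rel V) : Prop :=
  exists F : V -> frame R, restricted_frame_rep e F.
End Frames.

From HB Require Import structures.
From mathcomp Require Import all_boot all_order all_algebra.
From mathcomp Require Import reals.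
From mathcomp Require Import lra zify.
Set Implicit Arguments. Unset Strict Implicit. Unset Printing Implicit Defensive.
Import Order.TTheory GRing.Theory Num.Theory.

(* Let r be the apex of the chandelier and root the tree T = G - r at a vertex t. A tree
   vertex v of depth d(v) gets the frame [d(v), d(v) + 3/2] x I(v), where I(v) is an
   interval coding the path from t to v: the intervals of descendants are strictly nested
   and those of incomparable vertices are disjoint. Leaves are stretched to the right, up
   to |V| + 3. Hence the right side of a tree frame crosses exactly the frames of the
   children, and two non-adjacent tree frames are disjoint or strictly nested. The apex
   gets a tall frame ending at |V| + 2: its right side crosses exactly the stretched
   leaves, and it strictly encloses every other tree frame (if t is a leaf, the frame of
   t crosses it instead). So any two frames either pierce one another, realising an edge,
   or are apart, and conditions (1)-(4) only have to be checked for these positions. *)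

Lemma prefix_size_eq (T : eqType) (s1 s2 : seq T) :
  prefix s1 s2 -> size s1 = size s2 -> s1 = s2.
Proof. by rewrite prefixE => /eqP + sz; rewrite sz take_size. Qed.

Section PathCode.
Variables (R : realType) (V : finType).
Local Open Scope ring_scope.

Definition code_base : R := (2 * #|V| + 2)%:R.
Definition code_digit (x : V) : R := (2 * (enum_rank x).+1)%:R.
(* [code_lo s, code_hi s] is the closed interval of reals whose base-(2|V| + 2) expansion starts
   with the digits of s, each vertex being a nonzero even digit. The gaps between even
   digits make these intervals strictly nested along proper extensions of s, and
   disjoint for sequences that are not prefixes of one another. *)
Definition code_lo (s : seq V) : R :=
  foldr (fun x c => (code_digit x + c) / code_base) 0 s.
Definition code_len (s : seq V) : R := code_base ^- size s.
Definition code_hi (s : seq V) : R := code_lo s + code_len s.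

Lemma code_baseE : code_base = 2 * #|V|%:R + 2.
Proof. by rewrite /code_base natrD natrM. Qed.

Lemma code_base_gt0 : 0 < code_base.
Proof. by rewrite code_baseE; have : (0 : R) <= #|V|%:R by []; lra. Qed.

Lemma code_digit_ge2 x : 2 <= code_digit x.
Proof. by rewrite /code_digit natrM ler_peMr // ler1n. Qed.

Lemma code_digit_le x : code_digit x <= 2 * #|V|%:R.
Proof. by rewrite /code_digit natrM ler_pM2l // ler_nat. Qed.

Lemma code_lo_cons x s : code_lo (x :: s) = (code_digit x + code_lo s) / code_base.
Proof. by []. Qed.

Lemma code_hi_cons x s : code_hi (x :: s) = (code_digit x + code_hi s) / code_base.
Proof.
rewrite /code_hi /code_len code_lo_cons /= exprS invfM addrA [RHS]mulrDl.
by congr (_ + _); rewrite mulrC.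
Qed.

Lemma code_hi_nil : code_hi [::] = 1.
Proof. by rewrite /code_hi /code_len expr0 invr1 add0r. Qed.

Lemma code_len_gt0 s : 0 < code_len s.
Proof. by rewrite /code_len invr_gt0 exprn_gt0 // code_base_gt0. Qed.

Lemma code_lo_lt_hi s : code_lo s < code_hi s.
Proof. by rewrite /code_hi ltrDl code_len_gt0. Qed.

Lemma code_lo_ge0 s : 0 <= code_lo s.
Proof.
elim: s => [|x s IH] //; rewrite code_lo_cons divr_ge0 ?(ltW code_base_gt0) //.
by have := code_digit_ge2 x; lra.
Qed.

Lemma code_hi_le1 s : code_hi s <= 1.
Proof.
elim: s => [|x s IH]; first by rewrite code_hi_nil.
rewrite code_hi_cons ler_pdivrMr ?code_base_gt0 // mul1r code_baseE.
by have := code_digit_le x; lra.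
Qed.

Lemma ltr_div_base a b : a < b -> a / code_base < b / code_base.
Proof. by move=> ab; rewrite ltr_pM2r ?invr_gt0 ?code_base_gt0. Qed.

Lemma code_rcons s x :
  code_lo s < code_lo (rcons s x) /\ code_hi (rcons s x) < code_hi s.
Proof.
elim: s => [|y s [IHlo IHhi]]; last by rewrite rcons_cons !code_lo_cons !code_hi_cons;
  split; apply: ltr_div_base; rewrite ltrD2l.
rewrite /= code_hi_cons code_hi_nil; split.
  by rewrite addr0 divr_gt0 ?code_base_gt0 //; have := code_digit_ge2 x; lra.
rewrite ltr_pdivrMr ?code_base_gt0 // mul1r code_baseE.
by have := code_digit_le x; lra.
Qed.

Lemma code_disjoint s1 s2 : ~~ prefix s1 s2 -> ~~ prefix s2 s1 ->
  code_hi s1 < code_lo s2 \/ code_hi s2 < code_lo s1.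
Proof.
elim: s1 s2 => [|x s1 IH] [|y s2] //; rewrite !prefix_cons !code_hi_cons !code_lo_cons.
have [<-|xy] := eqVneq x y; rewrite ?eqxx //=.
  move=> n12 n21; case: (IH s2 n12 n21) => h; [left|right];
  by apply: ltr_div_base; rewrite ltrD2l.
move=> _ _; have := code_hi_le1 s1; have := code_hi_le1 s2.
have := code_lo_ge0 s1; have := code_lo_ge0 s2.
have [dxy|dyx] : code_digit x + 2 <= code_digit y \/ code_digit y + 2 <= code_digit x.
  rewrite /code_digit -!natrD !ler_nat.
  have : enum_rank x != enum_rank y by apply: contra_neq xy => /enum_rank_inj.
  by rewrite -val_eqE /=; lia.
- by left; apply: ltr_div_base; lra.
- by right; apply: ltr_div_base; lra.
Qed.

Lemma code_len_lt s1 s2 : (size s1 < size s2)%N -> code_len s2 < code_len s1.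
Proof.
move=> lt12; rewrite /code_len ltf_pV2 ?posrE ?exprn_gt0 ?code_base_gt0 //.
by rewrite ltr_eXn2l // code_baseE; have : (0 : R) <= #|V|%:R by []; lra.
Qed.

Lemma code_sub_prefix s1 s2 :
  code_lo s1 <= code_lo s2 -> code_hi s2 <= code_hi s1 -> prefix s1 s2.
Proof.
move=> lo12 hi21; apply: contraT => n12.
have [p21|n21] := boolP (prefix s2 s1); last first.
  by have := code_lo_lt_hi s1; have := code_lo_lt_hi s2; case: (code_disjoint n12 n21); lra.
have lt21 : (size s2 < size s1)%N.
  rewrite ltn_neqAle size_prefix // andbT; apply: contra n12 => /eqP sz.
  by rewrite (prefix_size_eq p21 sz) prefix_refl.
by have := code_len_lt lt21; move: lo12 hi21; rewrite /code_hi; lra.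
Qed.

End PathCode.

Section FramePositions.
Variable R : realType.
Local Open Scope ring_scope.
Implicit Types (F G W : frame R) (p : R * R).

Definition proper_frame F := fl F < fr F /\ fb F < ft F.

Definition pierces F G :=
  [/\ fl F < fl G, fl G < fr F, fr F < fr G, fb F < fb G & ft G < ft F].

Definition separated F G := [\/ fr F < fl G, fr G < fl F, ft F < fb G | ft G < fb F].

Definition encloses F G := [/\ fl F < fl G, fr G < fr F, fb F < fb G & ft G < ft F].

Definition apart F G := [\/ separated F G, encloses F G | encloses G F].

(* When F pierces G, their regions intersect in [fl G, fr F] x [fb G, ft G]. *)
Definition inside_overlap F G W :=
  [/\ fl G <= fl W, fr W <= fr F, fb G <= fb W & ft W <= ft G].

Lemma on_frame_in_box F p : proper_frame F -> on_frame F p -> in_box F p.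
Proof.
rewrite /on_frame /on_left /on_right /on_bottom /on_top /in_box => -[h1 h2].
case=> [[-> ?]|[[-> ?]|[[-> ?]|[-> ?]]]] /=; split=> //; apply/andP; split; lra.
Qed.

Lemma on_frame_sides F p : on_frame F p ->
  [\/ p.1 = fl F, p.1 = fr F, p.2 = fb F | p.2 = ft F].
Proof. by case=> [[-> ?]|[[-> ?]|[[-> ?]|[-> ?]]]]; constructor. Qed.

Lemma corner_on_frame F p : proper_frame F -> corner F p -> on_frame F p.
Proof.
move=> [f1 f2] [[e1|e1] [e2|e2]]; rewrite /on_frame /on_left /on_right;
  [left|left|right;left|right;left]; split=> //; rewrite e2; apply/andP; split; lra.
Qed.

Lemma apart_sym F G : apart F G -> apart G F.
Proof.
case=> [[] h|h|h]; [apply/Or31/Or42|apply/Or31/Or41|apply/Or31/Or44|apply/Or31/Or43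
  |exact: Or33|exact: Or32]; exact: h.
Qed.

Lemma apart_not_meets F G : proper_frame F -> proper_frame G -> apart F G ->
  ~ meets (on_frame F) (on_frame G).
Proof.
move=> pF pG ha [p [hF hG]].
have [/andP[a1 a2] /andP[a3 a4]] := on_frame_in_box pF hF.
have [/andP[b1 b2] /andP[b3 b4]] := on_frame_in_box pG hG.
by case: ha => [[] ?|[] ????|[] ????];
  case: (on_frame_sides hF) => ?; case: (on_frame_sides hG) => ?; lra.
Qed.

Lemma pierces_right_top_bottom F G : proper_frame F -> proper_frame G -> pierces F G ->
  meets (on_right F) (on_top G) /\ meets (on_right F) (on_bottom G).
Proof.
move=> [f1 f2] [g1 g2] [h1 h2 h3 h4 h5]; split.
- by exists (fr F, ft G); split; split=> //=; apply/andP; split; lra.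
- by exists (fr F, fb G); split; split=> //=; apply/andP; split; lra.
Qed.

Lemma pierces_meet F G : proper_frame F -> proper_frame G -> pierces F G ->
  meets (on_frame F) (on_frame G).
Proof.
move=> pF pG /(pierces_right_top_bottom pF pG) [[p [pr pt]] _].
by exists p; split; [right; left | right; right; right].
Qed.

Lemma apart_not_pierces F G : proper_frame F -> proper_frame G -> apart F G ->
  ~ pierces F G.
Proof. by move=> pF pG /(apart_not_meets pF pG) + /(pierces_meet pF pG). Qed.

Lemma pierces_corner F G : proper_frame F -> proper_frame G -> pierces F G ->
  (forall p, corner F p -> ~ on_frame G p) /\ (forall p, corner G p -> ~ on_frame F p).
Proof.
move=> pF [g1 g2] [h1 h2 h3 h4 h5]; split=> p [c1 c2] hp.
- have [_ /andP[b3 b4]] := on_frame_in_box (conj g1 g2) hp.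
  by case: c2; lra.
- have [/andP[b1 b2] _] := on_frame_in_box pF hp.
  by case: c1; case: c2; case: (on_frame_sides hp); lra.
Qed.

Lemma pierces_left F G : proper_frame F -> proper_frame G -> pierces F G ->
  ~ meets (on_left F) (on_frame G) /\ ~ meets (on_left G) (on_frame F).
Proof.
move=> pF [g1 g2] [h1 h2 h3 h4 h5]; split=> -[p [[e1 /andP[y1 y2]] hp]].
- by have [/andP[b1 b2] _] := on_frame_in_box (conj g1 g2) hp; lra.
- by case: (on_frame_sides hp); lra.
Qed.

Lemma pierced_right F G : proper_frame G -> pierces G F ->
  ~ meets (on_right F) (on_frame G).
Proof.
move=> pG [h1 h2 h3 h4 h5] [p [[e1 _] hp]].
by have [/andP[b1 b2] _] := on_frame_in_box pG hp; lra.
Qed.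

Lemma boxes_inside_overlap F G W : proper_frame W -> pierces F G ->
  (forall p, on_frame W p -> in_box F p /\ in_box G p) -> inside_overlap F G W.
Proof.
move=> pW [h1 h2 h3 h4 h5] hW.
have lb : corner W (fl W, fb W) by split; left.
have rt : corner W (fr W, ft W) by split; right.
have [[/andP[a1 a2] /andP[a3 a4]] [/andP[b1 b2] /andP[b3 b4]]] :=
  hW _ (corner_on_frame pW lb).
have [[/andP[d1 d2] /andP[d3 d4]] [/andP[c1 c2] /andP[c3 c4]]] :=
  hW _ (corner_on_frame pW rt).
by split; simpl in *; lra.
Qed.

Section Realisation.
Variables (V : finType) (e : rel V) (F : V -> frame R).

Definition realises u v :=
  if e u v then pierces (F u) (F v) \/ pierces (F v) (F u) else apart (F u) (F v).

Lemma realises_pierces u v : proper_frame (F u) -> proper_frame (F v) ->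
  realises u v -> pierces (F u) (F v) -> e u v.
Proof.
by rewrite /realises => pu pv; case: (e u v) => // /(apart_not_pierces pu pv).
Qed.

Hypothesis F_proper : forall v, proper_frame (F v).
Hypothesis F_realises : forall u v, u != v -> realises u v.
Hypothesis F_no_overlap : forall u v w, u != v -> pierces (F u) (F v) ->
  ~ inside_overlap (F u) (F v) (F w).

Lemma realises_meets u v : u != v ->
  e u v <-> meets (on_frame (F u)) (on_frame (F v)).
Proof.
move=> uv; have := F_realises uv; rewrite /realises.
case: (e u v) => [[]|] h; split=> //.
- by move=> _; apply: pierces_meet.
- move=> _; case: (pierces_meet (F_proper v) (F_proper u) h) => p [??].
  by exists p.
- by move/(apart_not_meets (F_proper u) (F_proper v) h).
Qed.

Lemma meets_pierces u v : u != v -> meets (on_frame (F u)) (on_frame (F v)) ->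
  pierces (F u) (F v) \/ pierces (F v) (F u).
Proof.
move=> uv /(realises_meets uv) euv.
by have := F_realises uv; rewrite /realises euv.
Qed.

Lemma restricted_frame_rep_of_realises : restricted_frame_rep e F.
Proof.
split; first exact: F_proper.
split; first exact: realises_meets.
split.
  move=> u v uv p cp vp.
  have muv : meets (on_frame (F u)) (on_frame (F v)).
    by exists p; split=> //; apply: corner_on_frame.
  case: (meets_pierces uv muv) => puv.
  - by have [/(_ p cp)] := pierces_corner (F_proper u) (F_proper v) puv.
  - by have [_ /(_ p cp)] := pierces_corner (F_proper v) (F_proper u) puv.
split.
  move=> u v uv ml.
  have muv : meets (on_frame (F u)) (on_frame (F v)).
    by case: ml => p [lp vp]; exists p; split => //; left.
  case: (meets_pierces uv muv) => puv.
  - by have [] := pierces_left (F_proper u) (F_proper v) puv.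
  - by have [] := pierces_left (F_proper v) (F_proper u) puv.
split.
  move=> u v uv mr.
  have muv : meets (on_frame (F u)) (on_frame (F v)).
    by case: mr => p [rp vp]; exists p; split => //; right; left.
  case: (meets_pierces uv muv) => puv.
  - exact: pierces_right_top_bottom.
  - by case: (pierced_right (F_proper v) puv mr).
move=> u v uv /(meets_pierces uv) [] puv w hw.
- exact: F_no_overlap uv puv (boxes_inside_overlap (F_proper w) puv hw).
- apply: F_no_overlap (puv) (boxes_inside_overlap (F_proper w) puv _).
    by rewrite eq_sym.
  by move=> p /hw [].
Qed.

End Realisation.
End FramePositions.

Section AcyclicPaths.
Variables (V : finType) (e : rel V) (S : {set V}).
Hypotheses (e_sym : symmetric e) (S_acyclic : acyclic_on e S).

Definition simple_path (x y : V) (p : seq V) :=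
  [&& path e x p, last x p == y, uniq (x :: p) & all (fun z => z \in S) p].

Lemma connected_simple_path x y : connected_on e S -> x \in S -> y \in S ->
  exists p, simple_path x y p.
Proof.
move=> S_conn xS yS; have [p [p_path <- Sp]] := S_conn x y xS yS.
case: (shortenP p_path) => q q_path uq qp; exists q; apply/and4P; split=> //.
by apply/allP => z /qp /(allP Sp).
Qed.

Lemma cycle_of_paths x z p q :
  path e x (rcons p z) -> path e x (rcons q z) -> cycle e (x :: rcons p z ++ rev q).
Proof.
move=> p_path q_path; rewrite /= rcons_cat -rev_cons cat_path p_path last_rcons /=.
have := rev_path e x (rcons q z); rewrite last_rcons belast_rcons => ->.
by rewrite (eq_path (e' := e)) // => a b; rewrite /= e_sym.
Qed.

Lemma acyclic_on_paths x z p q :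
  all (fun v => v \in S) (x :: rcons p z ++ q) -> uniq (x :: rcons p z ++ q) ->
  (p != [::]) || (q != [::]) ->
  path e x (rcons p z) -> path e x (rcons q z) -> False.
Proof.
move=> Sc uc pq p_path q_path; have := cycle_of_paths p_path q_path; apply/negP/S_acyclic.
- by move: Sc; rewrite /= !all_cat all_rev.
- by move: uc; rewrite -!cat_cons !cat_uniq rev_uniq has_rev.
- rewrite /= size_cat size_rcons size_rev.
  by case: p q pq {Sc uc p_path q_path} => [|? ?] [|? ?].
Qed.

Lemma simple_path_nil x y : simple_path x y [::] -> y = x.
Proof. by case/and4P=> _ /eqP. Qed.

Lemma simple_path_cons x y a p : simple_path x y (a :: p) -> y != x.
Proof.
case/and4P=> _ /eqP <- /andP[xp _] _; apply: contraNneq xp => <-.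
by rewrite /= mem_last.
Qed.

Lemma simple_path_behead x y a p : simple_path x y (a :: p) -> simple_path a y p.
Proof. by case/and4P=> /andP[_ ep] ly /andP[_ up] /andP[_ Sp]; apply/and4P. Qed.

Lemma simple_path_fork x y a b p q : x \in S ->
  simple_path x y (a :: p) -> simple_path x y (b :: q) -> a = b.
Proof.
move=> xS /and4P[p_path /eqP ly up Sp] /and4P[q_path /eqP lq uq Sq].
have [//|ab] := eqVneq a b; exfalso.
(* The first vertex z of b :: q on a :: p closes a cycle with the two paths to z. *)
have meet : has (fun z => z \in a :: p) (b :: q).
  apply/hasP; exists (last b q); first exact: mem_last.
  by rewrite -[last b q]/(last x (b :: q)) lq -ly /= mem_last.
move: ab p_path ly up Sp meet; move Ep: (a :: p) => pp ab p_path ly up Sp meet.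
move: q_path lq uq Sq meet; move Eq: (b :: q) => qq q_path lq uq Sq meet.
case: (split_find meet) Eq q_path lq uq Sq => z q1 q2 zp q1p Eq q_path lq uq Sq.
case/splitPr: zp Ep p_path up Sp q1p => p1 p2 Ep p_path up Sp q1p.
have p1_path : path e x (rcons p1 z).
  by move: p_path; rewrite -cat_rcons cat_path => /andP[].
have q1_path : path e x (rcons q1 z) by move: q_path; rewrite cat_path => /andP[].
apply: (acyclic_on_paths _ _ _ p1_path q1_path).
- have Sp1 : all (fun v => v \in S) (rcons p1 z).
    by move: Sp; rewrite -cat_rcons all_cat => /andP[].
  have Sq1 : all (fun v => v \in S) q1.
    by move: Sq; rewrite all_cat all_rcons => /andP[/andP[]].
  by rewrite /= xS all_cat Sp1 Sq1.
- rewrite -cat_cons cat_uniq; apply/and3P; split.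
  + by move: up; rewrite -cat_rcons -cat_cons cat_uniq => /andP[].
  + apply/hasPn => v vq1; rewrite /= inE negb_or; apply/andP; split.
      move: uq => /andP[xq _]; apply: contraNneq xq => <-.
      by rewrite mem_cat mem_rcons inE vq1 orbT.
    by apply: contra q1p => vp; apply/hasP; exists v; rewrite // -cat_rcons mem_cat vp.
  + by move: uq; rewrite /= cat_uniq rcons_uniq => /andP[_ /and3P[/andP[]]].
- move: Ep Eq ab; case: p1 {p_path p1_path up Sp q1p} => [|? ?] //.
  by case: q1 {q_path q1_path lq uq Sq} => [|? ?] // [<- _] [<- _]; rewrite eqxx.
Qed.

Lemma simple_path_uniq x y p q : x \in S ->
  simple_path x y p -> simple_path x y q -> p = q.
Proof.
elim: p x q => [|a p IH] x [|b q] // xS sp sq.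
- by move: (simple_path_cons sq); rewrite (simple_path_nil sp) eqxx.
- by move: (simple_path_cons sp); rewrite (simple_path_nil sq) eqxx.
have ab := simple_path_fork xS sp sq; subst b; congr (_ :: _).
apply: IH (simple_path_behead sp) (simple_path_behead sq).
by case/and4P: sp => _ _ _ /andP[].
Qed.

End AcyclicPaths.

Section RootedTree.
Variables (V : finType) (e : rel V) (S : {set V}) (t : V) (anc : V -> seq V).
Hypotheses (e_sym : symmetric e) (e_irr : irreflexive e) (S_acyclic : acyclic_on e S).
Hypotheses (tS : t \in S) (ancP : forall v, v \in S -> simple_path e S t v (anc v)).

Definition is_child u v := anc v = rcons (anc u) v.

Lemma anc_unique v p : v \in S -> simple_path e S t v p -> anc v = p.
Proof. by move=> vS; apply: simple_path_uniq tS (ancP vS). Qed.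

Lemma anc_root : anc t = [::].
Proof. by apply: anc_unique; rewrite // /simple_path /= eqxx. Qed.

Lemma child_size u v : is_child u v -> size (anc v) = (size (anc u)).+1.
Proof. by move=> ->; rewrite size_rcons. Qed.

Lemma child_neq_root u v : is_child u v -> v != t.
Proof.
by move=> uv; apply/eqP => vt; move: uv; rewrite /is_child vt anc_root; case: (anc u).
Qed.

Lemma last_anc v : v \in S -> last t (anc v) = v.
Proof. by case/ancP/and4P=> _ /eqP. Qed.

Lemma anc_inj : {in S &, injective anc}.
Proof. by move=> u v uS vS E; rewrite -(last_anc uS) -(last_anc vS) E. Qed.

Lemma anc_sub v x : v \in S -> x \in anc v -> x \in S.
Proof. by case/ancP/and4P=> _ _ _ /allP; apply. Qed.

Lemma size_anc v : v \in S -> (size (anc v) < #|V|)%N.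
Proof.
case/ancP/and4P=> _ _ u _; rewrite -ltnS -[(size _).+1]/(size (t :: anc v)).
by rewrite -(card_uniqP u) ltnS max_card.
Qed.

Lemma last_prefix_in v p1 p2 : v \in S -> anc v = p1 ++ p2 -> last t p1 \in S.
Proof.
move=> vS Ev; have := mem_last t p1; rewrite inE => /orP[/eqP->//|xp1].
by apply: (anc_sub vS); rewrite Ev mem_cat xp1.
Qed.

Lemma anc_cat v p1 p2 : v \in S -> anc v = p1 ++ p2 -> anc (last t p1) = p1.
Proof.
move=> vS Ev; apply: anc_unique; first exact: last_prefix_in Ev.
have /and4P[ep _ up Sp] := ancP vS; rewrite Ev in ep up Sp.
apply/and4P; split=> //; first by move: ep; rewrite cat_path => /andP[].
  by move: up; rewrite -cat_cons cat_uniq => /andP[].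
by move: Sp; rewrite all_cat => /andP[].
Qed.

Lemma anc_mem u v : u \in S -> v \in t :: anc u -> prefix (anc v) (anc u).
Proof.
move=> uS; move Eu: (anc u) => p vp; case/splitPl: vp Eu => p1 p2 <- Eu.
by rewrite (anc_cat uS Eu) prefix_prefix.
Qed.

Lemma child_edge u v : u \in S -> v \in S -> is_child u v -> e u v.
Proof.
move=> uS vS Ev; have /and4P[ep _ _ _] := ancP vS.
by move: ep; rewrite Ev rcons_path last_anc // => /andP[].
Qed.

Lemma anc_rcons u v : u \in S -> v \in S -> e u v -> v \notin t :: anc u ->
  is_child u v.
Proof.
move=> uS vS euv vu; apply: anc_unique => //.
have /and4P[ep /eqP lu up Sp] := ancP uS.
apply/and4P; split; first by rewrite rcons_path ep lu.
- by rewrite last_rcons.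
- by rewrite -rcons_cons rcons_uniq vu.
- by rewrite all_rcons vS.
Qed.

Lemma edge_child u v : u \in S -> v \in S -> e u v -> is_child u v \/ is_child v u.
Proof.
move=> uS vS euv.
have [vu|/(anc_rcons uS vS euv)] := boolP (v \in t :: anc u); last by left.
have [uv|uv] := boolP (u \in t :: anc v); last first.
  by right; apply: anc_rcons; rewrite // e_sym.
have Euv : anc u = anc v.
  apply: prefix_size_eq (anc_mem vS uv) _.
  by apply/eqP; rewrite eqn_leq !size_prefix ?anc_mem.
by move: euv; rewrite (anc_inj uS vS Euv) e_irr.
Qed.

Lemma anc_parent u : u \in S -> u != t -> exists2 p, p \in S & is_child p u.
Proof.
move=> uS ut; have := last_anc uS; case/lastP E: (anc u) => [|s x] /=.
  by move=> tu; rewrite -tu eqxx in ut.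
rewrite last_rcons => xu; subst x.
have Eu : anc u = s ++ [:: u] by rewrite E cats1.
exists (last t s); first exact: last_prefix_in Eu.
by rewrite /is_child (anc_cat uS Eu).
Qed.

Lemma child_not_leaf u x : u \in S -> x \in S -> u != t -> is_child u x ->
  ~~ leaf_on e S u.
Proof.
move=> uS xS ut Ex; have [p pS Eu] := anc_parent uS ut.
have px : p != x.
  apply/eqP => px; move: Ex; rewrite /is_child -px Eu => /(congr1 size).
  by rewrite !size_rcons; lia.
rewrite /leaf_on uS /=; apply/negP => /eqP deg1.
have : (#|[set p; x]| <= #|[set y in S | e u y]|)%N.
  apply/subset_leq_card/subsetP => y; rewrite !inE => /orP[] /eqP ->.
    by rewrite pS e_sym child_edge.
  by rewrite xS child_edge.
by rewrite cards2 px deg1.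
Qed.

Lemma anc_prefix_cases u v : u \in S -> v \in S -> prefix (anc u) (anc v) ->
  [\/ u = v, is_child u v |
      (exists2 x, x \in S & is_child u x) /\ ((size (anc u)).+2 <= size (anc v))%N].
Proof.
move=> uS vS /prefixP[[|x [|y w]] Ev].
- by constructor 1; apply: anc_inj; rewrite // Ev cats0.
- constructor 2; have := last_anc vS; rewrite Ev last_cat /= => xv.
  by rewrite /is_child Ev cats1 xv.
constructor 3; split; last by rewrite Ev size_cat /=; lia.
have Ev' : anc v = rcons (anc u) x ++ y :: w by rewrite Ev cat_rcons.
exists x; last by rewrite /is_child -{1}(last_rcons t (anc u) x) (anc_cat vS Ev').
by have := last_prefix_in vS Ev'; rewrite last_rcons.
Qed.

Section ChandelierFrames.
Variables (R : realType) (r : V).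
Hypothesis S_apex : forall v, (v \in S) = (v != r).
Hypothesis apex_leaves : forall x, x != r -> (e r x <-> leaf_on e S x).
Local Open Scope ring_scope.

Local Notation leaf := (leaf_on e S).
Local Notation N := (#|V|%:R : R).
Local Notation depth v := ((size (anc v))%:R : R).

Definition apex_frame : frame R :=
  if leaf t then Frame (1/2) (N + 2) (-1) 2 else Frame (-1) (N + 2) (-3) 4.

Definition tree_frame v : frame R :=
  if v == t then Frame 0 (3/2) (-2) 3
  else Frame (depth v) (if leaf v then N + 3 else depth v + 3/2)
             (code_lo R (anc v)) (code_hi R (anc v)).

Definition chandelier_frame v := if v == r then apex_frame else tree_frame v.

Local Notation F := chandelier_frame.

Lemma chandelier_frame_apex : F r = apex_frame.
Proof. by rewrite /chandelier_frame eqxx. Qed.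

Lemma chandelier_frame_tree v : v \in S -> F v = tree_frame v.
Proof. by rewrite /chandelier_frame S_apex => /negbTE ->. Qed.

Lemma tree_frameE v : v != t -> tree_frame v =
  Frame (depth v) (if leaf v then N + 3 else depth v + 3/2)
        (code_lo R (anc v)) (code_hi R (anc v)).
Proof. by rewrite /tree_frame => /negbTE ->. Qed.

Lemma apex_frame_bounds :
  [/\ -1 <= fl apex_frame, fl apex_frame <= 1/2, fr apex_frame = N + 2,
      fb apex_frame <= -1 & 2 <= ft apex_frame].
Proof. by rewrite /apex_frame; case: (leaf t); split=> //=; lra. Qed.

Lemma depth_root : depth t = 0.
Proof. by rewrite anc_root. Qed.

Lemma depth_lt v : v \in S -> depth v + 1 <= N.
Proof. by move=> vS; rewrite natr1 ler_nat (size_anc vS). Qed.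

Lemma depth_ge1 v : v \in S -> v != t -> 1 <= depth v.
Proof.
move=> vS vt; rewrite ler1n lt0n size_eq0; apply: contra vt => /eqP a0.
by have := last_anc vS; rewrite a0 => <-.
Qed.

Lemma fl_tree_frame v : v \in S -> fl (tree_frame v) = depth v.
Proof.
by move=> vS; rewrite /tree_frame; case: eqVneq => [->|]; rewrite ?depth_root.
Qed.

Lemma fr_tree_frame_ge v : v \in S -> depth v + 3/2 <= fr (tree_frame v).
Proof.
move=> vS; rewrite /tree_frame; case: eqVneq => [->|_ /=].
  by rewrite depth_root /=; lra.
by case: (leaf v); have := depth_lt vS; lra.
Qed.

Lemma fr_tree_frame_parent u x : u \in S -> x \in S -> is_child u x ->
  fr (tree_frame u) = depth u + 3/2.
Proof.
move=> uS xS ux; rewrite /tree_frame; case: eqVneq => [->|ut /=].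
  by rewrite depth_root add0r.
by rewrite (negbTE (child_not_leaf uS xS ut ux)).
Qed.

Lemma chandelier_frame_proper v : proper_frame (F v).
Proof.
have N0 : 0 <= N by [].
rewrite /chandelier_frame; case: eqVneq => [_|vr].
  by case: apex_frame_bounds => ? ? ? ? ?; split; lra.
have vS : v \in S by rewrite S_apex.
have := fr_tree_frame_ge vS; rewrite -(fl_tree_frame vS) => fr_fl.
split; first by lra.
rewrite /tree_frame; case: eqVneq => _ //=; first by lra.
exact: code_lo_lt_hi.
Qed.

Lemma apex_edgeE v : v != r -> e r v = leaf v.
Proof. by move=> vr; apply/idP/idP => /(apex_leaves vr). Qed.

Lemma realises_sym u v : realises e F u v -> realises e F v u.
Proof.
rewrite /realises e_sym; by case: (e v u) => [[h|h]|h]; [right|left|apply: apart_sym].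
Qed.

Lemma realises_apex v : v \in S -> realises e F r v.
Proof.
move=> vS; have vr : v != r by rewrite -S_apex.
have N0 : 0 <= N by [].
rewrite /realises chandelier_frame_apex (chandelier_frame_tree vS) (apex_edgeE vr).
have [->|vt] := eqVneq v t.
  rewrite /apex_frame /tree_frame eqxx; case: (leaf t) => /=.
    by right; split=> /=; lra.
  by apply: Or32; split=> /=; lra.
have := code_lo_ge0 R (anc v); have := code_hi_le1 R (anc v).
have := depth_ge1 vS vt; have := depth_lt vS.
case: apex_frame_bounds; rewrite (tree_frameE vt); case: (leaf v) => /= *.
  by left; split=> /=; lra.
by apply: Or32; split=> /=; lra.
Qed.

Lemma tree_frame_child_y u v : u \in S -> is_child u v ->
  fb (tree_frame u) < fb (tree_frame v) /\ ft (tree_frame v) < ft (tree_frame u).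
Proof.
move=> uS uv; rewrite (tree_frameE (child_neq_root uv)) /=.
have [->|ut] := eqVneq u t; last by rewrite (tree_frameE ut) /= uv; apply: code_rcons.
rewrite /tree_frame eqxx /=.
by have := code_lo_ge0 R (anc v); have := code_hi_le1 R (anc v); lra.
Qed.

Lemma realises_child u v : u \in S -> v \in S -> is_child u v -> realises e F u v.
Proof.
move=> uS vS uv; rewrite /realises (child_edge uS vS uv); left.
rewrite !chandelier_frame_tree //.
have [fbuv ftvu] := tree_frame_child_y uS uv.
have := fr_tree_frame_ge vS.
rewrite /pierces (fr_tree_frame_parent uS vS uv) !fl_tree_frame // (child_size uv) -natr1.
by split; lra.
Qed.

Lemma realises_descendant u v x : u \in S -> v \in S -> x \in S -> is_child u x ->
  ((size (anc u)).+2 <= size (anc v))%N -> realises e F u v.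
Proof.
move=> uS vS xS ux uv; rewrite /realises.
case: ifP => [euv|_].
  by case: (edge_child uS vS euv) => /child_size; lia.
apply/Or31/Or41; rewrite !chandelier_frame_tree // (fr_tree_frame_parent uS xS ux).
rewrite fl_tree_frame //; move: uv; rewrite -(ler_nat R) -addn2 natrD; lra.
Qed.

Lemma realises_incomparable u v : u \in S -> v \in S ->
  ~~ prefix (anc u) (anc v) -> ~~ prefix (anc v) (anc u) -> realises e F u v.
Proof.
move=> uS vS nuv nvu; rewrite /realises.
case: ifP => [euv|_].
  case: (edge_child uS vS euv) => E.
  - by rewrite E prefix_rcons in nuv.
  - by rewrite E prefix_rcons in nvu.
have ut : u != t by apply: contraNneq nuv => ->; rewrite anc_root prefix0s.
have vt : v != t by apply: contraNneq nvu => ->; rewrite anc_root prefix0s.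
apply/Or31; rewrite !chandelier_frame_tree // (tree_frameE ut) (tree_frameE vt).
by case: (code_disjoint R nuv nvu) => h; [apply: Or43 | apply: Or44].
Qed.

Lemma realises_prefix u v : u \in S -> v \in S -> u != v -> prefix (anc u) (anc v) ->
  realises e F u v.
Proof.
move=> uS vS uv /(anc_prefix_cases uS vS) [/eqP|uv_child|[[x xS ux] size_uv]].
- by rewrite (negbTE uv).
- exact: realises_child.
- exact: realises_descendant xS ux size_uv.
Qed.

Lemma realises_tree u v : u \in S -> v \in S -> u != v -> realises e F u v.
Proof.
move=> uS vS uv.
have [|nuv] := boolP (prefix (anc u) (anc v)); first exact: realises_prefix.
have [pvu|nvu] := boolP (prefix (anc v) (anc u)); last exact: realises_incomparable.
by apply/realises_sym/realises_prefix; rewrite 1?eq_sym.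
Qed.

Lemma realises_all u v : u != v -> realises e F u v.
Proof.
have [-> rv|ur] := eqVneq u r; first by apply: realises_apex; rewrite S_apex eq_sym.
have [-> _|vr uv] := eqVneq v r; first by apply/realises_sym/realises_apex; rewrite S_apex.
by apply: realises_tree; rewrite ?S_apex.
Qed.

Lemma inside_tree_frame v w : v \in S -> v != t ->
  fb (tree_frame v) <= fb (F w) -> ft (F w) <= ft (tree_frame v) ->
  [/\ w \in S, w != t & prefix (anc v) (anc w)].
Proof.
move=> vS vt; rewrite (tree_frameE vt) /=; have lo0 := code_lo_ge0 R (anc v).
have [->|wr] := eqVneq w r.
  by rewrite chandelier_frame_apex; case: apex_frame_bounds => *; exfalso; lra.
have wS : w \in S by rewrite S_apex.
rewrite (chandelier_frame_tree wS).
have [->|wt] := eqVneq w t; first by rewrite /tree_frame eqxx /= => *; exfalso; lra.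
by rewrite (tree_frameE wt) /= => lo hi; split=> //; apply: code_sub_prefix lo hi.
Qed.

Lemma chandelier_frame_wide w : 3/2 <= fr (F w) - fl (F w).
Proof.
have [->|wr] := eqVneq w r.
  rewrite chandelier_frame_apex; case: apex_frame_bounds => _ ? -> _ _.
  by have : 0 <= N by []; lra.
have wS : w \in S by rewrite S_apex.
by rewrite chandelier_frame_tree // fl_tree_frame //; have := fr_tree_frame_ge wS; lra.
Qed.

Lemma no_overlap_apex v w : v != r -> pierces (F r) (F v) ->
  ~ inside_overlap (F r) (F v) (F w).
Proof.
move=> vr prv; have vS : v \in S by rewrite S_apex.
have lv : leaf v.
  rewrite -apex_edgeE //; apply: realises_pierces (realises_apex vS) prv;
  exact: chandelier_frame_proper.
have vt : v != t.
  apply/eqP => vt; subst v; move: prv.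
  rewrite chandelier_frame_apex (chandelier_frame_tree vS) /apex_frame lv /tree_frame eqxx.
  by case=> /=; lra.
move: prv; rewrite chandelier_frame_apex (chandelier_frame_tree vS) => _ [_ frw fbw ftw].
have [wS _] := inside_tree_frame vS vt fbw ftw.
case/(anc_prefix_cases vS wS) => [wv|vw|[[x xS vx] _]].
- move: frw; rewrite -wv (chandelier_frame_tree vS) (tree_frameE vt) lv /=.
  by case: apex_frame_bounds => _ _ -> _ _; lra.
- by move: lv; rewrite (negbTE (child_not_leaf vS wS vt vw)).
- by move: lv; rewrite (negbTE (child_not_leaf vS xS vt vx)).
Qed.

(* Only t can pierce the apex frame, and their overlap is narrower than any frame. *)
Lemma no_overlap_apex_pierced u w : u != r -> pierces (F u) (F r) ->
  ~ inside_overlap (F u) (F r) (F w).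
Proof.
move=> ur; have uS : u \in S by rewrite S_apex.
rewrite chandelier_frame_apex (chandelier_frame_tree uS) => -[flu _ _ _ _] [flw frw _ _].
have ut : u = t.
  apply/eqP; apply: contraTT flu => ut; rewrite -leNgt fl_tree_frame //.
  by have := depth_ge1 uS ut; case: apex_frame_bounds => *; lra.
move: flu frw; rewrite ut /tree_frame eqxx /=.
by have := chandelier_frame_wide w; lra.
Qed.

Lemma no_overlap_tree u v w : u \in S -> v \in S -> u != v ->
  pierces (F u) (F v) -> ~ inside_overlap (F u) (F v) (F w).
Proof.
move=> uS vS uv puv.
have euv : e u v := realises_pierces (chandelier_frame_proper u)
  (chandelier_frame_proper v) (realises_tree uS vS uv) puv.
move: puv; rewrite (chandelier_frame_tree uS) (chandelier_frame_tree vS).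
move=> -[flu _ _ _ _] [_ frw fbw ftw].
have uv_child : is_child u v.
  case: (edge_child uS vS euv) => // vu.
  by move: flu; rewrite !fl_tree_frame // (child_size vu) -natr1; lra.
have vt := child_neq_root uv_child.
have [wS _ /size_prefix] := inside_tree_frame vS vt fbw ftw.
rewrite -(ler_nat R) (child_size uv_child) -natr1 => dw.
move: frw; rewrite (fr_tree_frame_parent uS vS uv_child) (chandelier_frame_tree wS).
by have := fr_tree_frame_ge wS; lra.
Qed.

Lemma no_inside_overlap u v w : u != v -> pierces (F u) (F v) ->
  ~ inside_overlap (F u) (F v) (F w).
Proof.
have [-> rv|ur] := eqVneq u r; first by apply: no_overlap_apex; rewrite eq_sym.
have [-> _|vr uv] := eqVneq v r; first exact: no_overlap_apex_pierced.
by apply: no_overlap_tree; rewrite ?S_apex.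
Qed.

End ChandelierFrames.

End RootedTree.

Theorem lemma3p1 (R : realType) (V : finType) (e : rel V) :
  symmetric e -> irreflexive e -> chandelier e -> restricted_frame_graph R e.
Proof.
move=> e_sym e_irr [r [[/set0Pn[t tT] [T_conn T_acyclic]] apex_leaves]].
have ancE v : exists p, (v \in [set~ r]) ==> simple_path e [set~ r] t v p.
  case: (boolP (v \in [set~ r])) => vT; last by exists [::].
  by have [p ?] := connected_simple_path T_conn tT vT; exists p.
have [anc ancP] : exists anc : V -> seq V,
    forall v, v \in [set~ r] -> simple_path e [set~ r] t v (anc v).
  by exists (fun v => xchoose (ancE v)) => v; apply/implyP/(xchooseP (ancE v)).
have S_apex v : (v \in [set~ r]) = (v != r) by rewrite in_setC1.
exists (chandelier_frame e [set~ r] t anc R r).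
apply: restricted_frame_rep_of_realises.
- exact: (chandelier_frame_proper e_sym T_acyclic tT ancP R S_apex).
- exact: (realises_all e_sym e_irr T_acyclic tT ancP R S_apex apex_leaves).
- exact: (no_inside_overlap e_sym e_irr T_acyclic tT ancP S_apex apex_leaves).
Qed.
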